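(* In system $\mathscr{E}$: let $\Phi\triangleright\Gamma\vdash^{(b,e,m,f)}t\{x/u\}:\sigma$. Then there exist derivations $\Phi_t,\Phi_u$, integers $b_t,b_u,e_t,e_u,m_t,m_u,f_t,f_u$, contexts $\Gamma_t,\Gamma_u$ and a multi-type $\mathcal{A}$ such that $\Phi_t\triangleright\Gamma_t;x:\mathcal{A}\vdash^{(b_t,e_t,m_t,f_t)}t:\sigma$, $\Phi_u\triangleright\Gamma_u\vdash^{(b_u,e_u,m_u,f_u)}u:\mathcal{A}$, $b=b_t+b_u$, $e=e_t+e_u$, $m=m_t+m_u$, $f=f_t+f_u$, and $\Gamma=\Gamma_t\wedge\Gamma_u$.
   Context: Pair pattern calculus: patterns $p,q ::= x\mid\langle p,q\rangle$ (linear); $\mathrm{var}(p)$ = variables of $p$; $p\# q$ means disjoint variables. Terms $t,u ::= x\mid\lambda p.t\mid\langle t,u\rangle\mid t\,u\mid t[p/u]$, $\mathrm{var}(p)$ bound in $t$ in $\lambda p.t$ and $t[p/u]$; terms modulo $\alpha$; $t\{x/u\}$ capture-avoiding substitution. System $\mathscr{E}$. Types: tight types $\mathtt{t} ::= \bullet_{\mathcal{N}}\mid\bullet_{\mathcal{M}}$; types $\sigma ::= \mathtt{t}\mid \mathcal{A}_1\times\mathcal{A}_2\mid \mathcal{A}\to\sigma$; multi-types $\mathcal{A} ::= [\sigma_k]_{k\in K}$ (finite, possibly empty $[\,]$). Contexts map variables to multi-types, $\mathrm{dom}(\Gamma)$ = variables with non-empty multi-type; $\Gamma;x:\mathcal{A}$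 extends $\Gamma$ ($x\notin\mathrm{dom}(\Gamma)$) by $x:\mathcal{A}$; $\wedge$ pointwise multiset union; $\Gamma|_p$ restriction to $\mathrm{var}(p)$; $\Gamma\setminus\mathrm{var}(p)$ removal. $\mathrm{tight}(\sigma)$ iff $\sigma\in\{\bullet_{\mathcal{N}},\bullet_{\mathcal{M}}\}$, extended elementwise. Rules: (pat_v) $x:\mathcal{A}\Vdash^{(1,0,0)} x:\mathcal{A}$. (pat_×) from $\Gamma\Vdash^{(e_p,m_p,f_p)}p:\mathcal{A}$, $\Delta\Vdash^{(e_q,m_q,f_q)}q:\mathcal{B}$, $p\#q$ infer $\Gamma\wedge\Delta\Vdash^{(e_p+e_q,1+m_p+m_q,f_p+f_q)}\langle p,q\rangle:[\mathcal{A}\times\mathcal{B}]$. (pat_p) if $\mathrm{dom}(\Gamma)\subseteq\mathrm{var}(\langle p,q\rangle)$ and $\mathrm{tight}(\Gamma)$ then $\Gamma\Vdash^{(0,0,1)}\langle p,q\rangle:[\bullet_{\mathcal{N}}]$. (ax) $x:[\sigma]\vdash^{(0,0,0,0)}x:\sigma$. (abs) from $\Gamma\vdash^{(b,e,m,f)}t:\sigma$ and $\Gamma|_p\Vdash^{(e_p,m_p,f_p)}p:\mathcal{A}$ infer $\Gamma\setminus\mathrm{var}(p)\vdash^{(b+1,e+e_p,m+m_p,f+f_p)}\lambda p.t:\mathcal{A}\to\sigma$. (abs_p) from $\Gamma\vdash^{(b,e,m,f)}t:\mathtt{t}$ ($\mathtt{t}$ tight) and $\mathrm{tight}(\Gamma|_p)$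 infer $\Gamma\setminus\mathrm{var}(p)\vdash^{(b,e,m,f+1)}\lambda p.t:\bullet_{\mathcal{M}}$. (many) from $(\Gamma_k\vdash^{(b_k,e_k,m_k,f_k)}t:\sigma_k)_{k\in K}$ infer $\wedge_k\Gamma_k\vdash^{(\sum b_k,\sum e_k,\sum m_k,\sum f_k)}t:[\sigma_k]_{k\in K}$. (app) from $\Gamma\vdash^{(b_t,e_t,m_t,f_t)}t:\mathcal{A}\to\sigma$, $\Delta\vdash^{(b_u,e_u,m_u,f_u)}u:\mathcal{A}$ infer $\Gamma\wedge\Delta\vdash^{(b_t+b_u,e_t+e_u,m_t+m_u,f_t+f_u)}t\,u:\sigma$. (app_p) from $\Gamma\vdash^{(b,e,m,f)}t:\bullet_{\mathcal{N}}$ infer $\Gamma\vdash^{(b,e,m,f+1)}t\,u:\bullet_{\mathcal{N}}$. (pair) from $\Gamma\vdash^{(b_t,e_t,m_t,f_t)}t:\mathcal{A}$, $\Delta\vdash^{(b_u,e_u,m_u,f_u)}u:\mathcal{B}$ infer $\Gamma\wedge\Delta\vdash^{(b_t+b_u,e_t+e_u,m_t+m_u,f_t+f_u)}\langle t,u\rangle:\mathcal{A}\times\mathcal{B}$. (pair_p) $\vdash^{(0,0,0,1)}\langle t,u\rangle:\bullet_{\mathcal{M}}$. (match) from $\Gamma\vdash^{(b_t,e_t,m_t,f_t)}t:\sigma$, $\Gamma|_p\Vdash^{(e_p,m_p,f_p)}p:\mathcal{A}$, $\Delta\vdash^{(b_u,e_u,m_u,f_u)}u:\mathcal{A}$ infer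 $(\Gamma\setminus\mathrm{var}(p))\wedge\Delta\vdash^{(b_t+b_u,e_t+e_u+e_p,m_t+m_u+m_p,f_t+f_u+f_p)}t[p/u]:\sigma$. *)

From Stdlib Require Import List Arith PeanoNat Permutation.
Import ListNotations.

Definition var := nat.

Inductive pat : Type :=
| PVar : var -> pat
| PPair : pat -> pat -> pat.

Fixpoint pvars (p : pat) : list var :=
  match p with
  | PVar x => [x]
  | PPair p q => pvars p ++ pvars q
  end.

Definition pdisj (p q : pat) : Prop :=
  forall y, In y (pvars p) -> ~ In y (pvars q).

Definition linear (p : pat) : Prop := NoDup (pvars p).

Inductive term : Type :=
| Var : var -> term
| Lam : pat -> term -> term
| Pair : term -> term -> term
| App : term -> term -> term
| Match : term -> pat -> term -> term.   (* Match t p u  =  t[p/u] *)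

Definition inpat (y : var) (p : pat) : bool := existsb (Nat.eqb y) (pvars p).

Fixpoint fv (t : term) : list var :=
  match t with
  | Var x => [x]
  | Lam p t => filter (fun y => negb (inpat y p)) (fv t)
  | Pair t u => fv t ++ fv u
  | App t u => fv t ++ fv u
  | Match t p u => filter (fun y => negb (inpat y p)) (fv t) ++ fv u
  end.

Fixpoint bv (t : term) : list var :=
  match t with
  | Var _ => []
  | Lam p t => pvars p ++ bv t
  | Pair t u => bv t ++ bv u
  | App t u => bv t ++ bv u
  | Match t p u => pvars p ++ bv t ++ bv u
  end.

Fixpoint wf_term (t : term) : Prop :=
  match t with
  | Var _ => True
  | Lam p t => linear p /\ wf_term t
  | Pair t u => wf_term t /\ wf_term u
  | App t u => wf_term t /\ wf_term u
  | Match t p u => linear p /\ wf_term t /\ wf_term u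
  end.

(* Substitution t{x/u}; it is capture-avoiding whenever the bound
   variables of t are disjoint from fv(u) (Barendregt convention). *)
Fixpoint subst (t : term) (x : var) (u : term) : term :=
  match t with
  | Var y => if Nat.eqb y x then u else Var y
  | Lam p t' => if inpat x p then Lam p t' else Lam p (subst t' x u)
  | Pair t1 t2 => Pair (subst t1 x u) (subst t2 x u)
  | App t1 t2 => App (subst t1 x u) (subst t2 x u)
  | Match t' p v =>
      Match (if inpat x p then t' else subst t' x u) p (subst v x u)
  end.

(* Types: tight types TN (bullet_N), TM (bullet_M); products of
   multi-types; arrows.  Multi-types are finite multisets, represented
   by lists considered up to (deep) permutation, see meq. *)
Inductive ty : Type :=
| TN : ty
| TM : ty
| TProd : list ty -> list ty -> ty
| TArr : list ty -> ty -> ty.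

Definition mty := list ty.

Inductive teq : ty -> ty -> Prop :=
| teq_N : teq TN TN
| teq_M : teq TM TM
| teq_prod A A' B B' : meq A A' -> meq B B' -> teq (TProd A B) (TProd A' B')
| teq_arr A A' s s' : meq A A' -> teq s s' -> teq (TArr A s) (TArr A' s')
with meq : mty -> mty -> Prop :=
| meq_nil : meq [] []
| meq_skip s s' A A' : teq s s' -> meq A A' -> meq (s :: A) (s' :: A')
| meq_swap s s' A : meq (s :: s' :: A) (s' :: s :: A)
| meq_trans A B C : meq A B -> meq B C -> meq A C.

Definition tight (s : ty) : Prop := s = TN \/ s = TM.

Definition ctx := var -> mty.
Definition ctx_eq (G D : ctx) : Prop := forall y, meq (G y) (D y).
Definition ctx_empty : ctx := fun _ => [].
Definition ctx_single (x : var) (A : mty) : ctx :=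
  fun y => if Nat.eqb y x then A else [].
Definition ctx_union (G D : ctx) : ctx := fun y => G y ++ D y.
(* G;x:A  (used only when x is not in dom G) *)
Definition ctx_ext (G : ctx) (x : var) (A : mty) : ctx :=
  fun y => if Nat.eqb y x then A else G y.
Definition ctx_restr (G : ctx) (p : pat) : ctx :=
  fun y => if inpat y p then G y else [].
Definition ctx_remove (G : ctx) (p : pat) : ctx :=
  fun y => if inpat y p then [] else G y.
Definition in_dom (G : ctx) (y : var) : Prop := G y <> [].
Definition tight_ctx (G : ctx) : Prop := forall y s, In s (G y) -> tight s.

Inductive ptyping : ctx -> pat -> mty -> nat -> nat -> nat -> Prop :=
| pat_v x A : ptyping (ctx_single x A) (PVar x) A 1 0 0
| pat_x G D p q A B ep mp fp eq mq fq :
    ptyping G p A ep mp fp -> ptyping D q B eq mq fq -> pdisj p q ->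
    ptyping (ctx_union G D) (PPair p q) [TProd A B] (ep + eq) (1 + mp + mq) (fp + fq)
| pat_p G p q :
    (forall y, in_dom G y -> In y (pvars (PPair p q))) -> tight_ctx G ->
    ptyping G (PPair p q) [TN] 0 0 1
(* multisets are quotiented: conversion up to multiset equality *)
| pat_conv G G' p A A' e m f :
    ptyping G p A e m f -> ctx_eq G G' -> meq A A' -> ptyping G' p A' e m f.

Inductive typing : ctx -> term -> ty -> nat -> nat -> nat -> nat -> Prop :=
| ty_ax x s : typing (ctx_single x [s]) (Var x) s 0 0 0 0
| ty_abs G t s p A b e m f ep mp fp :
    typing G t s b e m f -> ptyping (ctx_restr G p) p A ep mp fp ->
    typing (ctx_remove G p) (Lam p t) (TArr A s) (b + 1) (e + ep) (m + mp) (f + fp)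
| ty_abs_p G t tt p b e m f :
    typing G t tt b e m f -> tight tt -> tight_ctx (ctx_restr G p) ->
    typing (ctx_remove G p) (Lam p t) TM b e m (f + 1)
| ty_app G D t u A s bt et mt ft bu eu mu fu :
    typing G t (TArr A s) bt et mt ft -> mtyping D u A bu eu mu fu ->
    typing (ctx_union G D) (App t u) s (bt + bu) (et + eu) (mt + mu) (ft + fu)
| ty_app_p G t u b e m f :
    typing G t TN b e m f -> typing G (App t u) TN b e m (f + 1)
| ty_pair G D t u A B bt et mt ft bu eu mu fu :
    mtyping G t A bt et mt ft -> mtyping D u B bu eu mu fu ->
    typing (ctx_union G D) (Pair t u) (TProd A B) (bt + bu) (et + eu) (mt + mu) (ft + fu)
| ty_pair_p t u : typing ctx_empty (Pair t u) TM 0 0 0 1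
| ty_match G D t p u s A bt et mt ft ep mp fp bu eu mu fu :
    typing G t s bt et mt ft -> ptyping (ctx_restr G p) p A ep mp fp ->
    mtyping D u A bu eu mu fu ->
    typing (ctx_union (ctx_remove G p) D) (Match t p u) s
      (bt + bu) (et + eu + ep) (mt + mu + mp) (ft + fu + fp)
| ty_conv G G' t s s' b e m f :
    typing G t s b e m f -> ctx_eq G G' -> teq s s' -> typing G' t s' b e m f
with mtyping : ctx -> term -> mty -> nat -> nat -> nat -> nat -> Prop :=
| many_nil t : mtyping ctx_empty t [] 0 0 0 0
| many_cons G D t s A b e m f b' e' m' f' :
    typing G t s b e m f -> mtyping D t A b' e' m' f' ->
    mtyping (ctx_union G D) t (s :: A) (b + b') (e + e') (m + m') (f + f')
| many_conv G G' t A A' b e m f :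
    mtyping G t A b e m f -> ctx_eq G G' -> meq A A' -> mtyping G' t A' b e m f.

(* The subderivations typing the
   copies of u that replaced occurrences of x are gathered into one
   multi-typing of u at the multiset A of their types, while the remaining
   derivation, with those leaves turned into axioms for x, types t under
   x : A.  Every rule adds up the counters and unions the contexts of its
   premises, so both are shared additively between the two parts.  At a
   pattern binder of t the context of u must not lose variables; this holds
   because the bound variables of t do not occur free in u, and a typing
   context only assigns types to free variables. *)

From Stdlib Require Import List PeanoNat Permutation Lia.
Import ListNotations.

Definition meq_refl_by (teq_refl : forall s, teq s s) : forall A, meq A A :=
  fix go A :=
    match A with
    | [] => meq_nil
    | a :: A' => meq_skip a a A' A' (teq_refl a) (go A')
    end.

Fixpoint teq_refl (s : ty) : teq s s :=
  match s with
  | TN => teq_N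
  | TM => teq_M
  | TProd A B => teq_prod A A B B (meq_refl_by teq_refl A) (meq_refl_by teq_refl B)
  | TArr A s' => teq_arr A A s' s' (meq_refl_by teq_refl A) (teq_refl s')
  end.

Lemma meq_refl A : meq A A.
Proof. exact (meq_refl_by teq_refl A). Qed.

Scheme teq_min := Minimality for teq Sort Prop
with meq_min := Minimality for meq Sort Prop.
Combined Scheme teq_meq_min from teq_min, meq_min.

Lemma teq_meq_sym :
  (forall s s', teq s s' -> teq s' s) /\ (forall A A', meq A A' -> meq A' A).
Proof. apply teq_meq_min; intros; try apply meq_swap; econstructor; eauto. Qed.

Lemma meq_sym A A' : meq A A' -> meq A' A.
Proof. apply teq_meq_sym. Qed.

Lemma meq_app_l A B B' : meq B B' -> meq (A ++ B) (A ++ B').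
Proof.
  induction A as [|a A IH]; simpl; intros HB; [exact HB|].
  apply meq_skip; [apply teq_refl | exact (IH HB)].
Qed.

Lemma meq_app A A' B B' : meq A A' -> meq B B' -> meq (A ++ B) (A' ++ B').
Proof.
  intros HA; revert B B'.
  induction HA as [| s s' A A' Hs HA IH | s s' A | A1 A2 A3 H12 IH12 H23 IH23];
    simpl; intros B B' HB.
  - exact HB.
  - exact (meq_skip _ _ _ _ Hs (IH _ _ HB)).
  - eapply meq_trans; [apply meq_swap|].
    apply meq_app_l with (A := s' :: s :: A); exact HB.
  - exact (meq_trans _ _ _ (IH12 _ _ (meq_refl B)) (IH23 _ _ HB)).
Qed.

Lemma Permutation_meq A B : Permutation A B -> meq A B.
Proof.
  induction 1.
  - apply meq_nil.
  - apply meq_skip; [apply teq_refl | assumption].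
  - apply meq_swap.
  - eapply meq_trans; eassumption.
Qed.

Lemma meq_length A B : meq A B -> length A = length B.
Proof. induction 1; simpl; congruence. Qed.

Lemma meq_nil_l A : meq [] A -> A = [].
Proof. intros H; apply meq_length in H; destruct A; [reflexivity | discriminate]. Qed.

Lemma teq_tight s s' : teq s s' -> tight s -> tight s'.
Proof. intros Hs [-> | ->]; inversion Hs; [left | right]; reflexivity. Qed.

Lemma meq_tight A B :
  meq A B -> (forall s, In s A -> tight s) -> forall s, In s B -> tight s.
Proof.
  induction 1; simpl; intros HA s0 Hs0.
  - contradiction.
  - destruct Hs0 as [<- | Hs0]; [eapply teq_tight; eauto | eauto].
  - apply HA; tauto.
  - eauto.
Qed.

Lemma ctx_eq_refl G : ctx_eq G G.
Proof. intros y; apply meq_refl. Qed.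

Lemma ctx_eq_sym G D : ctx_eq G D -> ctx_eq D G.
Proof. intros H y; apply meq_sym, H. Qed.

Lemma ctx_eq_trans G D E : ctx_eq G D -> ctx_eq D E -> ctx_eq G E.
Proof. intros H1 H2 y; exact (meq_trans _ _ _ (H1 y) (H2 y)). Qed.

Lemma ctx_eq_union G G' D D' :
  ctx_eq G G' -> ctx_eq D D' -> ctx_eq (ctx_union G D) (ctx_union G' D').
Proof. intros HG HD y; apply meq_app; [apply HG | apply HD]. Qed.

Lemma ctx_union_empty_r G : ctx_eq G (ctx_union G ctx_empty).
Proof. intros y; unfold ctx_union, ctx_empty; rewrite app_nil_r; apply meq_refl. Qed.

Lemma ctx_union_assoc G1 G2 G3 :
  ctx_eq (ctx_union G1 (ctx_union G2 G3)) (ctx_union (ctx_union G1 G2) G3).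
Proof. intros y; unfold ctx_union; rewrite app_assoc; apply meq_refl. Qed.

Lemma ctx_union_swap_middle G1 G2 D1 D2 :
  ctx_eq (ctx_union (ctx_union G1 D1) (ctx_union G2 D2))
         (ctx_union (ctx_union G1 G2) (ctx_union D1 D2)).
Proof.
  intros y; unfold ctx_union; apply Permutation_meq.
  rewrite <- !app_assoc; apply Permutation_app_head, Permutation_app_swap_app.
Qed.

Lemma tight_ctx_eq G G' : ctx_eq G G' -> tight_ctx G -> tight_ctx G'.
Proof. intros Hc HG y; exact (meq_tight _ _ (Hc y) (HG y)). Qed.

Lemma ctx_ext_nil G x : G x = [] -> ctx_eq G (ctx_ext G x []).
Proof.
  intros Hx y; unfold ctx_ext.
  destruct (Nat.eqb_spec y x) as [-> |]; [rewrite Hx|]; apply meq_refl.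
Qed.

Lemma ctx_union_ext G1 G2 x A1 A2 :
  ctx_eq (ctx_union (ctx_ext G1 x A1) (ctx_ext G2 x A2))
         (ctx_ext (ctx_union G1 G2) x (A1 ++ A2)).
Proof. intros y; unfold ctx_union, ctx_ext; destruct (y =? x); apply meq_refl. Qed.

Lemma ctx_union_ext_r G D x A :
  G x = [] -> ctx_eq (ctx_union G (ctx_ext D x A)) (ctx_ext (ctx_union G D) x A).
Proof.
  intros Hx y; unfold ctx_union, ctx_ext.
  destruct (Nat.eqb_spec y x) as [-> |]; [rewrite Hx|]; apply meq_refl.
Qed.

Lemma ctx_remove_ext G x A p :
  inpat x p = false ->
  ctx_eq (ctx_remove (ctx_ext G x A) p) (ctx_ext (ctx_remove G p) x A).
Proof.
  intros Hxp y; unfold ctx_remove, ctx_ext.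
  destruct (Nat.eqb_spec y x) as [-> |]; [rewrite Hxp|]; apply meq_refl.
Qed.

Lemma ctx_remove_split G Gt Gu p :
  ctx_eq G (ctx_union Gt Gu) -> (forall y, inpat y p = true -> Gu y = []) ->
  ctx_eq (ctx_remove G p) (ctx_union (ctx_remove Gt p) Gu).
Proof.
  intros Hc Hp y; unfold ctx_remove, ctx_union.
  destruct (inpat y p) eqn:Hy; [rewrite (Hp y Hy); apply meq_nil | apply Hc].
Qed.

Lemma ctx_restr_split G Gt Gu p x A :
  ctx_eq G (ctx_union Gt Gu) -> (forall y, inpat y p = true -> Gu y = []) ->
  inpat x p = false ->
  ctx_eq (ctx_restr G p) (ctx_restr (ctx_ext Gt x A) p).
Proof.
  intros Hc Hp Hxp y; unfold ctx_restr, ctx_ext.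
  destruct (inpat y p) eqn:Hy; [|apply meq_nil].
  destruct (Nat.eqb_spec y x) as [-> | _]; [congruence|].
  specialize (Hc y); unfold ctx_union in Hc.
  rewrite (Hp y Hy), app_nil_r in Hc; exact Hc.
Qed.

Lemma in_unbound y p l :
  In y (filter (fun z => negb (inpat z p)) l) <-> In y l /\ inpat y p = false.
Proof. rewrite filter_In, Bool.negb_true_iff; reflexivity. Qed.

Definition fresh_for (l : list var) (u : term) : Prop :=
  forall y, In y l -> ~ In y (fv u).

Lemma fresh_for_app l1 l2 u :
  fresh_for (l1 ++ l2) u -> fresh_for l1 u /\ fresh_for l2 u.
Proof. intros H; split; intros y Hy; apply H, in_or_app; auto. Qed.

Lemma subst_fresh t x u : ~ In x (fv t) -> subst t x u = t.
Proof.
  induction t as [y | p t IH | t1 IH1 t2 IH2 | t1 IH1 t2 IH2 | t1 IH1 p t2 IH2];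
    simpl; intros Hx; rewrite ?in_app_iff in Hx.
  - destruct (Nat.eqb_spec y x) as [-> |]; [tauto | reflexivity].
  - destruct (inpat x p) eqn:Hxp; [reflexivity|].
    rewrite IH; [reflexivity|]. intros Ht; apply Hx, in_unbound; auto.
  - rewrite IH1, IH2; tauto.
  - rewrite IH1, IH2; tauto.
  - rewrite IH2 by tauto. destruct (inpat x p) eqn:Hxp; [reflexivity|].
    rewrite IH1; [reflexivity|]. intros Ht; apply Hx; left; apply in_unbound; auto.
Qed.

Lemma subst_not_Var t x u y : In x (fv t) -> t <> Var x -> subst t x u <> Var y.
Proof.
  destruct t as [z | p t | t1 t2 | t1 t2 | t1 p t2]; simpl; intros Hin Hne.
  - destruct Hin as [-> | []]; contradiction.
  - destruct (inpat x p); discriminate.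
  - discriminate.
  - discriminate.
  - discriminate.
Qed.

Lemma subst_eq_Lam t x u p T :
  In x (fv t) -> t <> Var x -> Lam p T = subst t x u ->
  exists t', t = Lam p t' /\ inpat x p = false /\ T = subst t' x u.
Proof.
  destruct t as [z | q t | t1 t2 | t1 t2 | t1 q t2]; simpl; intros Hin Hne Heq.
  - destruct Hin as [-> | []]; contradiction.
  - apply in_unbound in Hin as [_ Hxq]; rewrite Hxq in Heq.
    injection Heq as -> ->; eauto.
  - discriminate.
  - discriminate.
  - discriminate.
Qed.

Lemma subst_eq_App t x u T1 T2 :
  In x (fv t) -> t <> Var x -> App T1 T2 = subst t x u ->
  exists t1 t2, t = App t1 t2 /\ T1 = subst t1 x u /\ T2 = subst t2 x u.
Proof.
  destruct t as [z | q t | t1 t2 | t1 t2 | t1 q t2]; simpl; intros Hin Hne Heq.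
  - destruct Hin as [-> | []]; contradiction.
  - destruct (inpat x q); discriminate.
  - discriminate.
  - injection Heq as -> ->; eauto.
  - discriminate.
Qed.

Lemma subst_eq_Pair t x u T1 T2 :
  In x (fv t) -> t <> Var x -> Pair T1 T2 = subst t x u ->
  exists t1 t2, t = Pair t1 t2 /\ T1 = subst t1 x u /\ T2 = subst t2 x u.
Proof.
  destruct t as [z | q t | t1 t2 | t1 t2 | t1 q t2]; simpl; intros Hin Hne Heq.
  - destruct Hin as [-> | []]; contradiction.
  - destruct (inpat x q); discriminate.
  - injection Heq as -> ->; eauto.
  - discriminate.
  - discriminate.
Qed.

Lemma subst_eq_Match t x u T1 p T2 :
  In x (fv t) -> t <> Var x -> Match T1 p T2 = subst t x u ->
  exists t1 t2, t = Match t1 p t2 /\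
    T1 = (if inpat x p then t1 else subst t1 x u) /\ T2 = subst t2 x u.
Proof.
  destruct t as [z | q t | t1 t2 | t1 t2 | t1 q t2]; simpl; intros Hin Hne Heq.
  - destruct Hin as [-> | []]; contradiction.
  - destruct (inpat x q); discriminate.
  - discriminate.
  - discriminate.
  - injection Heq as -> -> ->; eauto.
Qed.

Lemma typing_ctx_conv G G' t s b e m f :
  typing G t s b e m f -> ctx_eq G G' -> typing G' t s b e m f.
Proof. intros Ht Hc; exact (ty_conv _ _ _ _ _ _ _ _ _ Ht Hc (teq_refl s)). Qed.

Lemma mtyping_ctx_conv G G' t A b e m f :
  mtyping G t A b e m f -> ctx_eq G G' -> mtyping G' t A b e m f.
Proof. intros Ht Hc; exact (many_conv _ _ _ _ _ _ _ _ _ Ht Hc (meq_refl A)). Qed.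

Lemma ptyping_ctx_conv G G' p A e m f :
  ptyping G p A e m f -> ctx_eq G G' -> ptyping G' p A e m f.
Proof. intros Hp Hc; exact (pat_conv _ _ _ _ _ _ _ _ Hp Hc (meq_refl A)). Qed.

Lemma mtyping_single G t s b e m f :
  typing G t s b e m f -> mtyping G t [s] b e m f.
Proof.
  intros Ht.
  pose proof (many_cons _ _ _ _ _ _ _ _ _ _ _ _ _ Ht (many_nil t)) as Hs.
  rewrite !Nat.add_0_r in Hs.
  exact (mtyping_ctx_conv _ _ _ _ _ _ _ _ Hs (ctx_eq_sym _ _ (ctx_union_empty_r G))).
Qed.

Lemma mtyping_app G1 G2 t A1 A2 b1 e1 m1 f1 b2 e2 m2 f2 :
  mtyping G1 t A1 b1 e1 m1 f1 -> mtyping G2 t A2 b2 e2 m2 f2 ->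
  mtyping (ctx_union G1 G2) t (A1 ++ A2) (b1 + b2) (e1 + e2) (m1 + m2) (f1 + f2).
Proof.
  intros H1 H2; revert H2.
  induction H1 as [t | G D t s A b e m f b' e' m' f' Hs HA IH
                   | G G' t A A' b e m f HA IH Hc HAA']; simpl; intros H2.
  - exact H2.
  - rewrite <- !Nat.add_assoc.
    eapply mtyping_ctx_conv; [exact (many_cons _ _ _ _ _ _ _ _ _ _ _ _ _ Hs (IH H2))|].
    apply ctx_union_assoc.
  - eapply many_conv; [exact (IH H2) | |].
    + exact (ctx_eq_union _ _ _ _ Hc (ctx_eq_refl G2)).
    + exact (meq_app _ _ _ _ HAA' (meq_refl A2)).
Qed.

Scheme typing_min := Minimality for typing Sort Prop
with mtyping_min := Minimality for mtyping Sort Prop.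
Combined Scheme typing_mtyping_min from typing_min, mtyping_min.

Lemma ctx_relevant :
  (forall G t s b e m f, typing G t s b e m f -> forall y, ~ In y (fv t) -> G y = []) /\
  (forall G t A b e m f, mtyping G t A b e m f -> forall y, ~ In y (fv t) -> G y = []).
Proof.
  apply typing_mtyping_min; simpl; unfold ctx_single, ctx_remove, ctx_union, ctx_empty.
  - intros z s y Hy.
    destruct (Nat.eqb_spec y z) as [-> |]; [tauto | reflexivity].
  - intros G t s p A b e m f ep mp fp _ IH _ y Hy.
    destruct (inpat y p) eqn:Hyp; [reflexivity|].
    apply IH; intros Ht; apply Hy, in_unbound; auto.
  - intros G t tau p b e m f _ IH _ _ y Hy.
    destruct (inpat y p) eqn:Hyp; [reflexivity|].
    apply IH; intros Ht; apply Hy, in_unbound; auto.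
  - intros G D t1 t2 A s bt et mt ft bu eu mu fu _ IH1 _ IH2 y Hy.
    rewrite in_app_iff in Hy; rewrite IH1, IH2; tauto.
  - intros G t1 t2 b e m f _ IH y Hy.
    rewrite in_app_iff in Hy; apply IH; tauto.
  - intros G D t1 t2 A B bt et mt ft bu eu mu fu _ IH1 _ IH2 y Hy.
    rewrite in_app_iff in Hy; rewrite IH1, IH2; tauto.
  - intros t1 t2 y _; reflexivity.
  - intros G D t1 p t2 s A bt et mt ft ep mp fp bu eu mu fu _ IH1 _ _ IH2 y Hy.
    rewrite in_app_iff in Hy; rewrite IH2 by tauto.
    destruct (inpat y p) eqn:Hyp; [reflexivity|].
    rewrite IH1; [reflexivity|]. intros Ht; apply Hy; left; apply in_unbound; auto.
  - intros G G' t s s' b e m f _ IH Hc _ y Hy.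
    apply meq_nil_l; rewrite <- (IH y Hy); apply Hc.
  - intros t y _; reflexivity.
  - intros G D t s A b e m f b' e' m' f' _ IH1 _ IH2 y Hy.
    rewrite IH1, IH2; auto.
  - intros G G' t A A' b e m f _ IH Hc _ y Hy.
    apply meq_nil_l; rewrite <- (IH y Hy); apply Hc.
Qed.

Lemma typing_ctx_relevant G t s b e m f y :
  typing G t s b e m f -> ~ In y (fv t) -> G y = [].
Proof. intros Ht; exact (proj1 ctx_relevant _ _ _ _ _ _ _ Ht y). Qed.

Lemma mtyping_ctx_pat_nil G t A b e m f p :
  mtyping G t A b e m f -> fresh_for (pvars p) t ->
  forall y, inpat y p = true -> G y = [].
Proof.
  intros Ht Hp y Hy.
  apply (proj2 ctx_relevant _ _ _ _ _ _ _ Ht), Hp.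
  unfold inpat in Hy; apply existsb_exists in Hy as [z [Hz Hyz]].
  apply Nat.eqb_eq in Hyz; subst z; exact Hz.
Qed.

Definition judgement (T : Type) := ctx -> term -> T -> nat -> nat -> nat -> nat -> Prop.

Section Antisubstitution.

Variables (x : var) (u : term).

Definition antisubst {T} (J : judgement T) G t (s : T) b e m f : Prop :=
  exists (Gt Gu : ctx) (A : mty) (bt bu et eu mt mu ft fu : nat),
    Gt x = nil /\
    J (ctx_ext Gt x A) t s bt et mt ft /\
    mtyping Gu u A bu eu mu fu /\
    b = bt + bu /\ e = et + eu /\ m = mt + mu /\ f = ft + fu /\
    ctx_eq G (ctx_union Gt Gu).

Lemma antisubst_var G s b e m f :
  typing G u s b e m f -> antisubst typing G (Var x) s b e m f.
Proof.
  intros Hu; exists ctx_empty, G, [s], 0, b, 0, e, 0, m, 0, f.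
  repeat split; auto using ty_ax, mtyping_single, ctx_eq_refl.
Qed.

Lemma antisubst_unused G t s b e m f :
  G x = [] -> typing G t s b e m f -> antisubst typing G t s b e m f.
Proof.
  intros Hx Ht; exists G, ctx_empty, [], b, 0, e, 0, m, 0, f, 0.
  repeat split; try lia; auto using many_nil, ctx_union_empty_r.
  exact (typing_ctx_conv _ _ _ _ _ _ _ _ Ht (ctx_ext_nil G x Hx)).
Qed.

Lemma antisubst_lift G T t s b e m f :
  typing G T s b e m f -> T = subst t x u ->
  (In x (fv t) -> t <> Var x -> antisubst typing G t s b e m f) ->
  antisubst typing G t s b e m f.
Proof.
  intros HT -> IH.
  destruct (in_dec Nat.eq_dec x (fv t)) as [Hin | Hout].
  - destruct t as [y | | | |]; [| apply IH; [exact Hin | discriminate] ..].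
    destruct Hin as [-> | []].
    simpl in HT; rewrite Nat.eqb_refl in HT.
    exact (antisubst_var _ _ _ _ _ _ HT).
  - rewrite subst_fresh in HT by exact Hout.
    exact (antisubst_unused _ _ _ _ _ _ _ (typing_ctx_relevant _ _ _ _ _ _ _ _ HT Hout) HT).
Qed.

Lemma antisubst_conv {T} {J : judgement T} {R : T -> T -> Prop}
    (Jconv : forall G G' t s s' b e m f,
       J G t s b e m f -> ctx_eq G G' -> R s s' -> J G' t s' b e m f)
    {G G' t s s' b e m f} :
  antisubst J G t s b e m f -> ctx_eq G G' -> R s s' -> antisubst J G' t s' b e m f.
Proof.
  intros (Gt & Gu & A & bt & bu & et & eu & mt & mu & ft & fu
          & Hx & Ht & Hu & Hb & He & Hm & Hf & Hc) HG Hs.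
  exists Gt, Gu, A, bt, bu, et, eu, mt, mu, ft, fu.
  repeat split; auto.
  - exact (Jconv _ _ _ _ _ _ _ _ _ Ht (ctx_eq_refl _) Hs).
  - exact (ctx_eq_trans _ _ _ (ctx_eq_sym _ _ HG) Hc).
Qed.

Lemma antisubst_union {T1 T2 T} {J1 : judgement T1} {J2 : judgement T2} {J : judgement T}
    {t1 t2 t s1 s2 s}
    (Jconv : forall G G' t s b e m f,
       J G t s b e m f -> ctx_eq G G' -> J G' t s b e m f)
    (rule : forall G1 G2 b1 e1 m1 f1 b2 e2 m2 f2,
       J1 G1 t1 s1 b1 e1 m1 f1 -> J2 G2 t2 s2 b2 e2 m2 f2 ->
       J (ctx_union G1 G2) t s (b1 + b2) (e1 + e2) (m1 + m2) (f1 + f2))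
    {G1 G2 b1 e1 m1 f1 b2 e2 m2 f2} :
  antisubst J1 G1 t1 s1 b1 e1 m1 f1 -> antisubst J2 G2 t2 s2 b2 e2 m2 f2 ->
  antisubst J (ctx_union G1 G2) t s (b1 + b2) (e1 + e2) (m1 + m2) (f1 + f2).
Proof.
  intros (Gt1 & Gu1 & A1 & bt1 & bu1 & et1 & eu1 & mt1 & mu1 & ft1 & fu1
          & Hx1 & Ht1 & Hu1 & -> & -> & -> & -> & Hc1)
         (Gt2 & Gu2 & A2 & bt2 & bu2 & et2 & eu2 & mt2 & mu2 & ft2 & fu2
          & Hx2 & Ht2 & Hu2 & -> & -> & -> & -> & Hc2).
  exists (ctx_union Gt1 Gt2), (ctx_union Gu1 Gu2), (A1 ++ A2),
    (bt1 + bt2), (bu1 + bu2), (et1 + et2), (eu1 + eu2),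
    (mt1 + mt2), (mu1 + mu2), (ft1 + ft2), (fu1 + fu2).
  repeat split; try lia.
  - unfold ctx_union; rewrite Hx1, Hx2; reflexivity.
  - exact (Jconv _ _ _ _ _ _ _ _ (rule _ _ _ _ _ _ _ _ _ _ Ht1 Ht2) (ctx_union_ext _ _ _ _ _)).
  - exact (mtyping_app _ _ _ _ _ _ _ _ _ _ _ _ _ Hu1 Hu2).
  - exact (ctx_eq_trans _ _ _ (ctx_eq_union _ _ _ _ Hc1 Hc2) (ctx_union_swap_middle _ _ _ _)).
Qed.

Lemma antisubst_abs G t s p A b e m f ep mp fp :
  inpat x p = false -> fresh_for (pvars p) u ->
  antisubst typing G t s b e m f -> ptyping (ctx_restr G p) p A ep mp fp ->
  antisubst typing (ctx_remove G p) (Lam p t) (TArr A s)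
    (b + 1) (e + ep) (m + mp) (f + fp).
Proof.
  intros Hxp Hfresh (Gt & Gu & B & bt & bu & et & eu & mt & mu & ft & fu
                     & Hx & Ht & Hu & -> & -> & -> & -> & Hc) Hp.
  pose proof (mtyping_ctx_pat_nil _ _ _ _ _ _ _ _ Hu Hfresh) as HGu.
  exists (ctx_remove Gt p), Gu, B, (bt + 1), bu, (et + ep), eu, (mt + mp), mu, (ft + fp), fu.
  repeat split; try lia.
  - unfold ctx_remove; rewrite Hxp; exact Hx.
  - eapply typing_ctx_conv; [apply ty_abs; [exact Ht|] | apply ctx_remove_ext, Hxp].
    exact (ptyping_ctx_conv _ _ _ _ _ _ _ Hp (ctx_restr_split _ _ _ _ _ _ Hc HGu Hxp)).
  - exact Hu.
  - exact (ctx_remove_split _ _ _ _ Hc HGu).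
Qed.

Lemma antisubst_abs_p G t tau p b e m f :
  inpat x p = false -> fresh_for (pvars p) u ->
  antisubst typing G t tau b e m f -> tight tau -> tight_ctx (ctx_restr G p) ->
  antisubst typing (ctx_remove G p) (Lam p t) TM b e m (f + 1).
Proof.
  intros Hxp Hfresh (Gt & Gu & B & bt & bu & et & eu & mt & mu & ft & fu
                     & Hx & Ht & Hu & -> & -> & -> & -> & Hc) Htt Htight.
  pose proof (mtyping_ctx_pat_nil _ _ _ _ _ _ _ _ Hu Hfresh) as HGu.
  exists (ctx_remove Gt p), Gu, B, bt, bu, et, eu, mt, mu, (ft + 1), fu.
  repeat split; try lia.
  - unfold ctx_remove; rewrite Hxp; exact Hx.
  - eapply typing_ctx_conv; [eapply ty_abs_p; [exact Ht | exact Htt |] | apply ctx_remove_ext, Hxp].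
    exact (tight_ctx_eq _ _ (ctx_restr_split _ _ _ _ _ _ Hc HGu Hxp) Htight).
  - exact Hu.
  - exact (ctx_remove_split _ _ _ _ Hc HGu).
Qed.

(* The argument of an application typed by app_p is erased, so it
   contributes nothing to the multi-type of u. *)
Lemma antisubst_app_p G t1 t2 b e m f :
  antisubst typing G t1 TN b e m f -> antisubst typing G (App t1 t2) TN b e m (f + 1).
Proof.
  intros (Gt & Gu & A & bt & bu & et & eu & mt & mu & ft & fu
          & Hx & Ht & Hu & Hb & He & Hm & -> & Hc).
  exists Gt, Gu, A, bt, bu, et, eu, mt, mu, (ft + 1), fu.
  repeat split; try lia; auto using ty_app_p.
Qed.

Lemma antisubst_match_bound G D t1 p t2 s A bt et mt ft ep mp fp b e m f :
  inpat x p = true -> typing G t1 s bt et mt ft -> ptyping (ctx_restr G p) p A ep mp fp ->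
  antisubst mtyping D t2 A b e m f ->
  antisubst typing (ctx_union (ctx_remove G p) D) (Match t1 p t2) s
    (bt + b) (et + e + ep) (mt + m + mp) (ft + f + fp).
Proof.
  intros Hxp Ht1 Hp (Gt & Gu & B & bt2 & bu & et2 & eu & mt2 & mu & ft2 & fu
                     & Hx & Ht2 & Hu & -> & -> & -> & -> & Hc).
  assert (HGx : ctx_remove G p x = []) by (unfold ctx_remove; rewrite Hxp; reflexivity).
  exists (ctx_union (ctx_remove G p) Gt), Gu, B, (bt + bt2), bu,
    (et + et2 + ep), eu, (mt + mt2 + mp), mu, (ft + ft2 + fp), fu.
  repeat split; try lia.
  - unfold ctx_union; rewrite HGx, Hx; reflexivity.
  - eapply typing_ctx_conv; [eapply ty_match; [exact Ht1 | exact Hp | exact Ht2]|].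
    exact (ctx_union_ext_r _ _ _ _ HGx).
  - exact Hu.
  - exact (ctx_eq_trans _ _ _ (ctx_eq_union _ _ _ _ (ctx_eq_refl _) Hc) (ctx_union_assoc _ _ _)).
Qed.

Lemma antisubst_match_free G D t1 p t2 s A b1 e1 m1 f1 ep mp fp b2 e2 m2 f2 :
  inpat x p = false -> fresh_for (pvars p) u ->
  antisubst typing G t1 s b1 e1 m1 f1 -> ptyping (ctx_restr G p) p A ep mp fp ->
  antisubst mtyping D t2 A b2 e2 m2 f2 ->
  antisubst typing (ctx_union (ctx_remove G p) D) (Match t1 p t2) s
    (b1 + b2) (e1 + e2 + ep) (m1 + m2 + mp) (f1 + f2 + fp).
Proof.
  intros Hxp Hfresh
    (Gt1 & Gu1 & A1 & bt1 & bu1 & et1 & eu1 & mt1 & mu1 & ft1 & fu1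
     & Hx1 & Ht1 & Hu1 & -> & -> & -> & -> & Hc1) Hp
    (Gt2 & Gu2 & A2 & bt2 & bu2 & et2 & eu2 & mt2 & mu2 & ft2 & fu2
     & Hx2 & Ht2 & Hu2 & -> & -> & -> & -> & Hc2).
  pose proof (mtyping_ctx_pat_nil _ _ _ _ _ _ _ _ Hu1 Hfresh) as HGu1.
  exists (ctx_union (ctx_remove Gt1 p) Gt2), (ctx_union Gu1 Gu2), (A1 ++ A2),
    (bt1 + bt2), (bu1 + bu2), (et1 + et2 + ep), (eu1 + eu2),
    (mt1 + mt2 + mp), (mu1 + mu2), (ft1 + ft2 + fp), (fu1 + fu2).
  repeat split; try lia.
  - unfold ctx_union, ctx_remove; rewrite Hxp, Hx1, Hx2; reflexivity.
  - eapply typing_ctx_conv; [eapply ty_match; [exact Ht1 | | exact Ht2]|].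
    + exact (ptyping_ctx_conv _ _ _ _ _ _ _ Hp (ctx_restr_split _ _ _ _ _ _ Hc1 HGu1 Hxp)).
    + eapply ctx_eq_trans; [|apply ctx_union_ext].
      exact (ctx_eq_union _ _ _ _ (ctx_remove_ext _ _ _ _ Hxp) (ctx_eq_refl _)).
  - exact (mtyping_app _ _ _ _ _ _ _ _ _ _ _ _ _ Hu1 Hu2).
  - eapply ctx_eq_trans; [|apply ctx_union_swap_middle].
    exact (ctx_eq_union _ _ _ _ (ctx_remove_split _ _ _ _ Hc1 HGu1) Hc2).
Qed.

Lemma antisubst_many_nil t : antisubst mtyping ctx_empty t [] 0 0 0 0.
Proof.
  exists ctx_empty, ctx_empty, [], 0, 0, 0, 0, 0, 0, 0, 0.
  repeat split; auto using many_nil, ctx_eq_refl.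
  exact (mtyping_ctx_conv _ _ _ _ _ _ _ _ (many_nil t) (ctx_ext_nil ctx_empty x eq_refl)).
Qed.

(* Only derivations of t{x/u} with x free in t and t <> x are handled here;
   antisubst_lift takes care of the other terms. *)
Lemma antisubst_derivation :
  (forall G T s b e m f, typing G T s b e m f ->
     forall t, T = subst t x u -> fresh_for (bv t) u ->
     In x (fv t) -> t <> Var x -> antisubst typing G t s b e m f) /\
  (forall G T A b e m f, mtyping G T A b e m f ->
     forall t, T = subst t x u -> fresh_for (bv t) u ->
     antisubst mtyping G t A b e m f).
Proof.
  apply typing_mtyping_min.
  - intros y s t Heq _ Hin Hne.
    exfalso; exact (subst_not_Var t x u y Hin Hne (eq_sym Heq)).
  - intros G T s p A b e m f ep mp fp HT IH Hp t Heq Hb Hin Hne.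
    destruct (subst_eq_Lam _ _ _ _ _ Hin Hne Heq) as (t' & -> & Hxp & HT').
    apply fresh_for_app in Hb as [Hbp Hb].
    apply antisubst_abs; [exact Hxp | exact Hbp | | exact Hp].
    exact (antisubst_lift _ _ _ _ _ _ _ _ HT HT' (IH t' HT' Hb)).
  - intros G T tau p b e m f HT IH Htt Htight t Heq Hb Hin Hne.
    destruct (subst_eq_Lam _ _ _ _ _ Hin Hne Heq) as (t' & -> & Hxp & HT').
    apply fresh_for_app in Hb as [Hbp Hb].
    apply antisubst_abs_p with (tau := tau); [exact Hxp | exact Hbp | | exact Htt | exact Htight].
    exact (antisubst_lift _ _ _ _ _ _ _ _ HT HT' (IH t' HT' Hb)).
  - intros G D T1 T2 A s bt et mt ft bu eu mu fu HT1 IH1 HT2 IH2 t Heq Hb Hin Hne.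
    destruct (subst_eq_App _ _ _ _ _ Hin Hne Heq) as (t1 & t2 & -> & Heq1 & Heq2).
    apply fresh_for_app in Hb as [Hb1 Hb2].
    apply (antisubst_union typing_ctx_conv (fun G1 G2 => ty_app G1 G2 t1 t2 A s)).
    + exact (antisubst_lift _ _ _ _ _ _ _ _ HT1 Heq1 (IH1 t1 Heq1 Hb1)).
    + exact (IH2 t2 Heq2 Hb2).
  - intros G T1 T2 b e m f HT1 IH1 t Heq Hb Hin Hne.
    destruct (subst_eq_App _ _ _ _ _ Hin Hne Heq) as (t1 & t2 & -> & Heq1 & _).
    apply fresh_for_app in Hb as [Hb1 _].
    apply antisubst_app_p.
    exact (antisubst_lift _ _ _ _ _ _ _ _ HT1 Heq1 (IH1 t1 Heq1 Hb1)).
  - intros G D T1 T2 A B bt et mt ft bu eu mu fu HT1 IH1 HT2 IH2 t Heq Hb Hin Hne.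
    destruct (subst_eq_Pair _ _ _ _ _ Hin Hne Heq) as (t1 & t2 & -> & Heq1 & Heq2).
    apply fresh_for_app in Hb as [Hb1 Hb2].
    apply (antisubst_union typing_ctx_conv (fun G1 G2 => ty_pair G1 G2 t1 t2 A B)).
    + exact (IH1 t1 Heq1 Hb1).
    + exact (IH2 t2 Heq2 Hb2).
  - intros T1 T2 t Heq _ Hin Hne.
    destruct (subst_eq_Pair _ _ _ _ _ Hin Hne Heq) as (t1 & t2 & -> & _ & _).
    apply antisubst_unused; [reflexivity | apply ty_pair_p].
  - intros G D T1 p T2 s A bt et mt ft ep mp fp bu eu mu fu HT1 IH1 Hp HT2 IH2
      t Heq Hb Hin Hne.
    destruct (subst_eq_Match _ _ _ _ _ _ Hin Hne Heq) as (t1 & t2 & -> & Heq1 & Heq2).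
    apply fresh_for_app in Hb as [Hbp Hb]; apply fresh_for_app in Hb as [Hb1 Hb2].
    destruct (inpat x p) eqn:Hxp.
    + subst T1.
      exact (antisubst_match_bound _ _ _ _ _ _ _ _ _ _ _ _ _ _ _ _ _ _
               Hxp HT1 Hp (IH2 t2 Heq2 Hb2)).
    + eapply antisubst_match_free; [exact Hxp | exact Hbp | | exact Hp | exact (IH2 t2 Heq2 Hb2)].
      exact (antisubst_lift _ _ _ _ _ _ _ _ HT1 Heq1 (IH1 t1 Heq1 Hb1)).
  - intros G G' T s s' b e m f _ IH Hc Hs t Heq Hb Hin Hne.
    exact (antisubst_conv ty_conv (IH t Heq Hb Hin Hne) Hc Hs).
  - intros T t _ _.
    apply antisubst_many_nil.
  - intros G D T s A b e m f b' e' m' f' HT IH1 _ IH2 t Heq Hb.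
    apply (antisubst_union mtyping_ctx_conv (fun G1 G2 => many_cons G1 G2 t s A)).
    + exact (antisubst_lift _ _ _ _ _ _ _ _ HT Heq (IH1 t Heq Hb)).
    + exact (IH2 t Heq Hb).
  - intros G G' T A A' b e m f _ IH Hc HA t Heq Hb.
    exact (antisubst_conv many_conv (IH t Heq Hb) Hc HA).
Qed.

Lemma antisubst_typing G t s b e m f :
  fresh_for (bv t) u -> typing G (subst t x u) s b e m f ->
  antisubst typing G t s b e m f.
Proof.
  intros Hb HT.
  exact (antisubst_lift _ _ _ _ _ _ _ _ HT eq_refl
           (proj1 antisubst_derivation _ _ _ _ _ _ _ HT t eq_refl Hb)).
Qed.

End Antisubstitution.

Theorem lemma8 (G : ctx) (t u : term) (x : var) (s : ty) (b e m f : nat) :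
  wf_term t -> wf_term u ->
  (forall y, In y (bv t) -> ~ In y (fv u)) ->
  typing G (subst t x u) s b e m f ->
  exists (Gt Gu : ctx) (A : mty) (bt bu et eu mt mu ft fu : nat),
    Gt x = nil /\
    typing (ctx_ext Gt x A) t s bt et mt ft /\
    mtyping Gu u A bu eu mu fu /\
    b = bt + bu /\ e = et + eu /\ m = mt + mu /\ f = ft + fu /\
    ctx_eq G (ctx_union Gt Gu).
Proof.
  intros _ _ Hb HT.
  exact (antisubst_typing x u G t s b e m f Hb HT).
Qed.
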